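(* In the multi-sender privacy game, let $(\alpha^{(i),0})_{i\in\mathbf{N}}\in\prod_iA'_i$ and $\beta^0\in B'$, and generate a random sequence as follows: for $k=1,2,\dots$, select $j\in\{0,1,\dots,n\}$ uniformly at random (independently of the past); if $j=0$, choose $\beta^k\in\arg\min_{\beta\in B'}V((\alpha^{(i),k-1})_{i},\beta)$ and set $\alpha^{(i),k}=\alpha^{(i),k-1}$ for all $i\in\mathbf{N}$; if $j\ge1$, choose $\alpha^{(j),k}\in\arg\min_{\alpha^{(j)}\in A'_j}U_j(\alpha^{(j)},(\alpha^{(i),k-1})_{i\neq j},\beta^{k-1})$, set $\alpha^{(i),k}=\alpha^{(i),k-1}$ for $i\in\mathbf{N}\setminus\{j\}$ and $\beta^k=\beta^{k-1}$. Then for every $\epsilon>0$, $\lim_{k\to\infty}\mathbb{P}\{((\alpha^{(i),k})_{i\in\mathbf{N}},\beta^k)\in\mathcal{N}'_\epsilon\}=1$, where $\mathcal{N}'_\epsilon$ is the set of all $((\alpha^{(i)})_i,\beta)\in\prod_iA'_i\times B'$ such that $U_j((\alpha^{(i)})_i,\beta)\le U_j(\bar\alpha^{(j)},(\alpha^{(i)})_{i\neq j},\beta)+\epsilon$ for all $j\in\mathbf{N}$, $\bar\alpha^{(j)}\in A'_j$, and $V((\alpha^{(i)})_i,\beta)\le V((\alpha^{(i)})_i,\bar\beta)+\epsilon$ for all $\bar\beta\in B'$.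
   Context: Multi-sender privacy game. Let $n\ge 2$, $\mathbf{N}=\{1,\dots,n\}$, and let $\mathcal{X}$, $\mathcal{W}_i$, $\mathcal{Y}_i$ ($i\in\mathbf{N}$) be finite nonempty sets. $(X,(Z_i)_{i\in\mathbf{N}},(W_i)_{i\in\mathbf{N}})$ has joint probability mass function $p$ on $\mathcal{X}\times\mathcal{X}^n\times\prod_i\mathcal{W}_i$. Sender $i$ observes $(Z_i,W_i)$ and sends $Y_i\in\mathcal{Y}_i$ with $\mathbb{P}\{Y_i=y_i\mid Z_i=z_i,W_i=w_i\}=\alpha^{(i)}_{y_iz_iw_i}$, independently across senders given the observations, where $\alpha^{(i)}\in A'_i=\{\alpha^{(i)}:\alpha^{(i)}_{y_iz_iw_i}\in[0,1],\ \sum_{y_i}\alpha^{(i)}_{y_iz_iw_i}=1\ \forall(z_i,w_i)\in\mathcal{X}\times\mathcal{W}_i\}$. The receiver outputs $\hat X\in\mathcal{X}$ with $\mathbb{P}\{\hat X=\hat x\mid (Y_i)_i=(y_i)_i\}=\beta_{\hat x y_1\dots y_n}$, $\beta\in B'=\{\beta:\beta_{\hat x y_1\dots y_n}\in[0,1],\ \sum_{\hat x}\beta_{\hat x y_1\dots y_n}=1\ \forall (y_i)_i\}$. Let $d:\mathcal{X}\times\mathcal{X}\to\mathbb{R}_{\ge0}$ and $\varrho\in\mathbb{R}$. Define $\xi'(\beta,(\alpha^{(i)})_i)=\sum_{(y_1,z_1,w_1)}\cdots\sum_{(y_n,z_n,w_n)}\sum_{\hat x,x\in\mathcal{X}}d(x,\hat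 x)\beta_{\hat x y_1\dots y_n}\prod_{i\in\mathbf{N}}\alpha^{(i)}_{y_iz_iw_i}\,p(x,(z_i)_i,(w_i)_i)$, each $(y_i,z_i,w_i)$ ranging over $\mathcal{Y}_i\times\mathcal{X}\times\mathcal{W}_i$ (this is $\mathbb{E}\{d(X,\hat X)\}$). Define $\zeta'_j(\alpha^{(j)})=I(Y_j;W_j)=\sum_{y,w}P^j_{yw}\log\frac{P^j_{yw}}{P^j_yP^j_w}$ (with $0\log0=0$), where $P^j_w=\mathbb{P}\{W_j=w\}$, $P^j_{yw}=\sum_{z\in\mathcal{X}}\alpha^{(j)}_{yzw}\mathbb{P}\{Z_j=z,W_j=w\}$, $P^j_y=\sum_w P^j_{yw}$. Sender $j$'s cost: $U_j((\alpha^{(i)})_i,\beta)=\xi'(\beta,(\alpha^{(i)})_i)+\varrho\zeta'_j(\alpha^{(j)})$; receiver's cost: $V((\alpha^{(i)})_i,\beta)=\xi'(\beta,(\alpha^{(i)})_i)$. *)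

From HB Require Import structures.
From mathcomp Require Import all_boot all_order all_algebra.
From mathcomp Require Import all_classical all_reals all_analysis.
Set Implicit Arguments. Unset Strict Implicit. Unset Printing Implicit Defensive.
Import Order.TTheory GRing.Theory Num.Theory.
Local Open Scope ring_scope.

Section Game.
Variable R : realType.
Variable n : nat.
Variable X : finType.
Variables (W Y : 'I_n -> finType).

Definition Zs := {ffun 'I_n -> X}.
Definition Ws := {dffun forall i : 'I_n, W i}.
Definition Ys := {dffun forall i : 'I_n, Y i}.

(* sender i's strategy alpha^(i)_{y z w} and receiver's beta_{xhat y_1..y_n} *)
Definition strat (i : 'I_n) := Y i -> X -> W i -> R.
Definition profile := forall i : 'I_n, strat i.
Definition rstrat := X -> Ys -> R.

Definition is_pmf (p : X -> Zs -> Ws -> R) : Prop :=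
  (forall x z w, 0 <= p x z w) /\
  \sum_(x : X) \sum_(z : Zs) \sum_(w : Ws) p x z w = 1.

Definition inA (i : 'I_n) (a : strat i) : Prop :=
  (forall y z w, 0 <= a y z w <= 1) /\ (forall z w, \sum_(y : Y i) a y z w = 1).
Definition inAs (al : profile) : Prop := forall i, inA (al i).
Definition inB (b : rstrat) : Prop :=
  (forall xh y, 0 <= b xh y <= 1) /\ (forall y, \sum_(xh : X) b xh y = 1).

Variable p : X -> Zs -> Ws -> R.
Variable d : X -> X -> R.
Variable rho : R.

Definition xi (b : rstrat) (al : profile) : R :=
  \sum_(y : Ys) \sum_(z : Zs) \sum_(w : Ws) \sum_(xh : X) \sum_(x : X)
    d x xh * b xh y * (\prod_(i : 'I_n) al i (y i) (z i) (w i)) * p x z w.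

Definition PZW (j : 'I_n) (z : X) (w : W j) : R :=
  \sum_(x : X) \sum_(zs : Zs | zs j == z) \sum_(ws : Ws | ws j == w) p x zs ws.
Definition PW (j : 'I_n) (w : W j) : R := \sum_(z : X) PZW z w.
Definition PYW (j : 'I_n) (a : strat j) (y : Y j) (w : W j) : R :=
  \sum_(z : X) a y z w * PZW z w.
Definition PY (j : 'I_n) (a : strat j) (y : Y j) : R :=
  \sum_(w : W j) PYW a y w.

(* zeta'_j(alpha^(j)) = I(Y_j; W_j), natural log, with 0 log 0 = 0 *)
Definition zeta (j : 'I_n) (a : strat j) : R :=
  \sum_(y : Y j) \sum_(w : W j)
    (if PYW a y w == 0 then 0
     else PYW a y w * ln (PYW a y w / (PY a y * PW w))).

Definition upd (al : profile) (j : 'I_n) (a : strat j) : profile :=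
  @dfwith _ strat al j a.

Definition U (j : 'I_n) (al : profile) (b : rstrat) : R :=
  xi b al + rho * zeta (al j).
Definition V (al : profile) (b : rstrat) : R := xi b al.

Definition inN (eps : R) (al : profile) (b : rstrat) : Prop :=
  inAs al /\ inB b /\
  (forall (j : 'I_n) (a : strat j), inA a -> U j al b <= U j (upd al a) b + eps) /\
  (forall bb : rstrat, inB bb -> V al b <= V al bb + eps).

(* A history is the list of the uniformly drawn indices
   j in {0,..,n} (encoded as 'I_n.+1; j = 0 is the receiver, j = i.+1 is sender i),
   most recent first.  The argmin selections may depend on the past history. *)
Variables (al0 : profile) (b0 : rstrat).
Variable selB : seq 'I_n.+1 -> profile -> rstrat.
Variable selA : forall j : 'I_n, seq 'I_n.+1 -> profile -> rstrat -> strat j.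

Fixpoint traj (h : seq 'I_n.+1) : profile * rstrat :=
  match h with
  | [::] => (al0, b0)
  | j :: h' =>
      let s := traj h' in
      match unlift ord0 j with
      | None => (s.1, selB h' s.1)
      | Some i => (upd s.1 (@selA i h' s.1 s.2), s.2)
      end
  end.

(* P{ ((alpha^(i),k)_i, beta^k) in N'_eps }, the k draws being i.i.d. uniform *)
Definition probN (eps : R) (k : nat) : R :=
  (\sum_(t : k.-tuple 'I_n.+1)
     (if `[< inN eps (traj t).1 (traj t).2 >] then 1 else 0))
  / ((n.+1) ^ k)%:R.

End Game.

(** The game is a potential game: with
    [phi = xi + rho * sum_i I(Y_i; W_i)], a unilateral deviation of sender [j]
    changes [phi] exactly as it changes [U_j], and a deviation of the receiver
    changes [phi] as it changes [V].  Hence no best-response step increases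
    [phi], and from a profile outside [N'_eps] at least one of the [n + 1]
    equally likely steps decreases it by [eps].  The expected potential thus
    drops by [eps / (n + 1)] times the probability of being outside
    [N'_eps] at every step; since mutual information is bounded on finite
    alphabets and [xi >= 0], [phi] is bounded below, so these probabilities
    are summable and tend to [0]. *)
From HB Require Import structures.
From mathcomp Require Import all_boot all_order all_algebra.
From mathcomp Require Import all_classical all_reals all_analysis.
From mathcomp Require Import lra ring.
Set Implicit Arguments. Unset Strict Implicit. Unset Printing Implicit Defensive.
Import Order.TTheory GRing.Theory Num.Theory.
Import numFieldNormedType.Exports.
Local Open Scope ring_scope.
Local Open Scope classical_set_scope.

Section LogBounds.
Variable R : realType.

Lemma ln_le_subr1 (x : R) : 0 < x -> ln x <= x - 1.
Proof. by move=> x0; have := @le_ln1Dx R (x - 1); rewrite [1 + _]addrC subrK; apply; lra. Qed.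

Lemma mulr_oppln_le1 (x : R) : 0 < x -> x * - ln x <= 1.
Proof.
move=> x0; have := @ln_le_subr1 x^-1; rewrite lnV ?posrE ?invr_gt0 // => /(_ x0) hl.
have := ler_wpM2l (ltW x0) hl; rewrite mulrBr mulfV ?gt_eqF //; lra.
Qed.

Lemma norm_mulr_ln_ratio_le1 (x y z : R) :
  0 < x -> x <= y <= 1 -> x <= z <= 1 -> `|x * ln (x / (y * z))| <= 1.
Proof.
move=> x0 /andP[xy y1] /andP[xz z1].
have y0 : 0 < y by lra.
have z0 : 0 < z by lra.
have -> : ln (x / (y * z)) = ln x - ln y - ln z.
  rewrite lnM ?posrE ?invr_gt0 ?mulr_gt0 // lnV ?posrE ?mulr_gt0 // lnM ?posrE //.
  lra.
have lxy : ln x <= ln y by rewrite ler_ln ?posrE.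
have lxz : ln x <= ln z by rewrite ler_ln ?posrE.
have ly0 : ln y <= 0 by exact: ln_le0.
have lz0 : ln z <= 0 by exact: ln_le0.
have : `|ln x - ln y - ln z| <= - ln x by rewrite ler_norml; apply/andP; split; lra.
rewrite normrM gtr0_norm // => hn.
exact: le_trans (ler_wpM2l (ltW x0) hn) (mulr_oppln_le1 x0).
Qed.

End LogBounds.

(* Telescoping bounds [c * series u] by [a 0 - L], so [u] is summable. *)
Lemma descent_cvg0 (R : realType) (a u : nat -> R) (c L : R) :
  0 < c -> (forall k, L <= a k) -> (forall k, 0 <= u k) ->
  (forall k, a k.+1 + c * u k <= a k) -> u @ \oo --> 0.
Proof.
move=> c0 aL u0 dec.
have telescope K : a K + c * \sum_(0 <= k < K) u k <= a 0.
  elim: K => [|K IH]; first by rewrite big_geq // mulr0 addr0.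
  rewrite big_nat_recr //= mulrDr addrCA addrC; apply: le_trans IH.
  by rewrite lerD2r.
have bounded K : \sum_(0 <= k < K) u k <= (a 0 - L) / c.
  rewrite ler_pdivlMr // mulrC; have := telescope K; have := aL K; lra.
apply: cvg_series_cvg_0; apply: nondecreasing_is_cvgn.
  by apply: nondecreasing_series => k _ _; exact: u0.
by exists ((a 0 - L) / c) => _ [K _ <-]; exact: bounded.
Qed.

Lemma sum_tuple_cons (R : nmodType) (T : finType) k (F : seq T -> R) :
  \sum_(t : k.+1.-tuple T) F t = \sum_(t : k.-tuple T) \sum_(j : T) F (j :: t).
Proof.
rewrite [RHS]exchange_big [RHS]pair_big /=.
rewrite (reindex (fun jt : T * k.-tuple T => cons_tuple jt.1 jt.2)) /=.
  by apply: eq_bigr => -[j t].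
exists (fun t : k.+1.-tuple T => (thead t, behead_tuple t)).
- by move=> [j t] _ /=; congr pair; apply: val_inj.
- by move=> t _; apply: val_inj; case: t => -[|x s].
Qed.

Section Marginals.
Variables (R : realType) (n : nat) (X : finType) (W Y : 'I_n -> finType).
Variable p : X -> Zs n X -> Ws W -> R.
Hypothesis p_pmf : is_pmf p.

Lemma PZW_ge0 j z (w : W j) : 0 <= PZW p z w.
Proof. by do 3 apply: sumr_ge0 => ? _; exact: p_pmf.1. Qed.

Lemma PW_ge0 j (w : W j) : 0 <= PW p w.
Proof. by apply: sumr_ge0 => z _; exact: PZW_ge0. Qed.

Lemma sum_PW j : \sum_(w : W j) PW p w = 1.
Proof.
rewrite -p_pmf.2 /PW /PZW exchange_big /=.
under eq_bigr => z _ do rewrite exchange_big /=.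
rewrite exchange_big /=; apply: eq_bigr => x _.
rewrite [RHS](partition_big (fun zs : Zs n X => zs j) xpredT) //=.
apply: eq_bigr => z _; rewrite exchange_big /=; apply: eq_bigr => zs _.
by rewrite [RHS](partition_big (fun ws : Ws W => ws j) xpredT).
Qed.

Lemma PW_le1 j (w : W j) : PW p w <= 1.
Proof. by rewrite -(sum_PW j) (bigD1 w) //= lerDl sumr_ge0 // => w' _; exact: PW_ge0. Qed.

Section Channel.
Variables (j : 'I_n) (a : strat R X W Y j).
Hypothesis a_stoch : inA a.

Lemma PYW_ge0 y w : 0 <= PYW p a y w.
Proof.
apply: sumr_ge0 => z _; apply: mulr_ge0; last exact: PZW_ge0.
by case/andP: (a_stoch.1 y z w).
Qed.

Lemma PYW_le_PW y w : PYW p a y w <= PW p w.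
Proof.
apply: ler_sum => z _; rewrite ler_piMl //; first exact: PZW_ge0.
by case/andP: (a_stoch.1 y z w).
Qed.

Lemma PYW_le_PY y w : PYW p a y w <= PY p a y.
Proof. by rewrite /PY (bigD1 w) //= lerDl sumr_ge0 // => w' _; exact: PYW_ge0. Qed.

Lemma sum_PY : \sum_y PY p a y = 1.
Proof.
rewrite -(sum_PW j) /PY /PYW exchange_big /=; apply: eq_bigr => w _.
rewrite exchange_big /=; apply: eq_bigr => z _.
by rewrite -mulr_suml a_stoch.2 mul1r.
Qed.

Lemma PY_le1 y : PY p a y <= 1.
Proof.
rewrite -sum_PY (bigD1 y) //= lerDl sumr_ge0 // => y' _.
by apply: sumr_ge0 => w _; exact: PYW_ge0.
Qed.

Lemma norm_zeta_le : `|zeta p a| <= (#|Y j| * #|W j|)%:R.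
Proof.
rewrite /zeta; apply: le_trans (ler_norm_sum _ _ _) _.
rewrite natrM -sum1_card natr_sum mulr_suml; apply: ler_sum => y _.
apply: le_trans (ler_norm_sum _ _ _) _.
rewrite mul1r -sum1_card natr_sum; apply: ler_sum => w _.
case: eqP => [_|/eqP nz]; first by rewrite normr0.
apply: norm_mulr_ln_ratio_le1.
- by rewrite lt_def nz PYW_ge0.
- by rewrite PYW_le_PY PY_le1.
- by rewrite PYW_le_PW PW_le1.
Qed.

End Channel.
End Marginals.

Section Deviation.
Variables (R : realType) (n : nat) (X : finType) (W Y : 'I_n -> finType).
Implicit Types (al : profile R X W Y).

Lemma upd_id al j : upd al (al j) = al.
Proof.
apply: functional_extensionality_dep => k; rewrite /upd.
by case: (eqVneq j k) => [<-|ne]; [rewrite dfwithin | rewrite dfwithout].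
Qed.

Lemma inAs_upd al j (a : strat R X W Y j) : inAs al -> inA a -> inAs (upd al a).
Proof.
move=> hal ha k; rewrite /upd.
by case: (eqVneq j k) => [<-|ne]; [rewrite dfwithin | rewrite dfwithout].
Qed.

End Deviation.

Section Potential.
Variables (R : realType) (n : nat) (X : finType) (W Y : 'I_n -> finType).
Variable p : X -> Zs n X -> Ws W -> R.
Variable d : X -> X -> R.
Variable rho : R.
Hypothesis p_pmf : is_pmf p.
Hypothesis d_ge0 : forall x xh, 0 <= d x xh.
Implicit Types (al : profile R X W Y) (b : rstrat R X Y).

Definition potential (al : profile R X W Y) (b : rstrat R X Y) : R :=
  xi p d b al + rho * \sum_(i : 'I_n) zeta p (al i).

Lemma potential_upd al i (a : strat R X W Y i) b :
  potential (upd al a) b - potential al b = U p d rho i (upd al a) b - U p d rho i al b.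
Proof.
rewrite /potential /U (bigD1 i) //= [in X in _ - X](bigD1 i) //=.
rewrite (eq_bigr (fun k => zeta p (al k))) => [|k ki]; last first.
  by rewrite /upd dfwithout // eq_sym.
rewrite /upd dfwithin; ring.
Qed.

Lemma potential_receiver al b b' :
  potential al b' - potential al b = V p d al b' - V p d al b.
Proof. rewrite /potential /V; ring. Qed.

Lemma xi_ge0 {al b} : inAs al -> inB b -> 0 <= xi p d b al.
Proof.
move=> hal hb; apply: sumr_ge0 => y _; apply: sumr_ge0 => z _.
apply: sumr_ge0 => w _; apply: sumr_ge0 => xh _; apply: sumr_ge0 => x _.
apply: mulr_ge0; last exact: p_pmf.1.
apply: mulr_ge0; first apply: mulr_ge0; first exact: d_ge0.
- by case/andP: (hb.1 xh y).
- by apply: prodr_ge0 => i _; case/andP: ((hal i).1 (y i) (z i) (w i)).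
Qed.

Definition potential_lb : R :=
  - (`|rho| * \sum_(i : 'I_n) (#|Y i| * #|W i|)%:R).

Lemma potential_lb_le {al b} : inAs al -> inB b -> potential_lb <= potential al b.
Proof.
move=> hal hb; rewrite /potential_lb /potential.
have hzeta : `|\sum_i zeta p (al i)| <= \sum_(i : 'I_n) (#|Y i| * #|W i|)%:R.
  apply: le_trans (ler_norm_sum _ _ _) _; apply: ler_sum => i _.
  exact: norm_zeta_le.
have := ler_wpM2l (normr_ge0 rho) hzeta.
have := ler_norm (- (rho * \sum_i zeta p (al i))); rewrite normrN normrM.
have := xi_ge0 hal hb; lra.
Qed.

End Potential.

Section Dynamics.
Variables (R : realType) (n : nat) (X : finType) (W Y : 'I_n -> finType).
Variable p : X -> Zs n X -> Ws W -> R.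
Variable d : X -> X -> R.
Variable rho : R.
Variables (al0 : profile R X W Y) (b0 : rstrat R X Y).
Variable selB : seq 'I_n.+1 -> profile R X W Y -> rstrat R X Y.
Variable selA : forall j : 'I_n,
  seq 'I_n.+1 -> profile R X W Y -> rstrat R X Y -> strat R X W Y j.
Arguments selA : clear implicits.
Hypothesis p_pmf : is_pmf p.
Hypothesis d_ge0 : forall x xh, 0 <= d x xh.
Hypothesis al0_feasible : inAs al0.
Hypothesis b0_feasible : inB b0.
Hypothesis selB_best : forall h al, inAs al ->
  inB (selB h al) /\ forall b, inB b -> V p d al (selB h al) <= V p d al b.
Hypothesis selA_best : forall (j : 'I_n) h al b, inAs al -> inB b ->
  inA (selA j h al b) /\
  forall a : strat R X W Y j, inA a ->
    U p d rho j (upd al (selA j h al b)) b <= U p d rho j (upd al a) b.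
Arguments selB_best : clear implicits.
Arguments selA_best : clear implicits.

Local Notation traj := (traj al0 b0 selB selA).
Local Notation phi h := (potential p d rho (traj h).1 (traj h).2).

Lemma traj_feasible h : inAs (traj h).1 /\ inB (traj h).2.
Proof.
elim: h => [|j h [hal hb]] //=.
case: (unlift ord0 j) => [i|] /=; last by split => //; exact: (selB_best h _ hal).1.
split => //; apply: inAs_upd => //; exact: (selA_best i h _ _ hal hb).1.
Qed.

Lemma traj_receiver h : traj (ord0 :: h) = ((traj h).1, selB h (traj h).1).
Proof. by rewrite /= unlift_none. Qed.

Lemma traj_sender h i :
  traj (lift ord0 i :: h) = (upd (traj h).1 (selA i h (traj h).1 (traj h).2), (traj h).2).
Proof. by rewrite /= liftK. Qed.

Lemma potential_traj_cons_le h j : phi (j :: h) <= phi h.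
Proof.
have [hal hb] := traj_feasible h.
case: (unliftP ord0 j) => [i ->|->].
- have := potential_upd p d rho (traj h).1 (selA i h (traj h).1 (traj h).2) (traj h).2.
  have := (selA_best i h _ _ hal hb).2 _ (hal i); rewrite upd_id traj_sender; lra.
- have := potential_receiver p d rho (traj h).1 (traj h).2 (selB h (traj h).1).
  have := (selB_best h _ hal).2 _ hb; rewrite traj_receiver; lra.
Qed.

Lemma inN_of_no_descent eps h :
  (forall j, phi h - eps < phi (j :: h)) -> inN p d rho eps (traj h).1 (traj h).2.
Proof.
move=> no_descent; have [hal hb] := traj_feasible h.
do 2 split => //; split.
- move=> i a ha; have := no_descent (lift ord0 i); rewrite traj_sender /=.
  have := potential_upd p d rho (traj h).1 (selA i h (traj h).1 (traj h).2) (traj h).2.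
  have := (selA_best i h _ _ hal hb).2 a ha; lra.
- move=> b' hb'; have := no_descent ord0; rewrite traj_receiver /=.
  have := potential_receiver p d rho (traj h).1 (traj h).2 (selB h (traj h).1).
  have := (selB_best h _ hal).2 b' hb'; lra.
Qed.

Definition indN eps h : R :=
  if `[< inN p d rho eps (traj h).1 (traj h).2 >] then 1 else 0.

Lemma sum_potential_traj_cons_le eps h :
  \sum_(j : 'I_n.+1) phi (j :: h) <= (n.+1)%:R * phi h - eps * (1 - indN eps h).
Proof.
have -> : (n.+1)%:R * phi h = \sum_(j : 'I_n.+1) phi h.
  by rewrite sumr_const card_ord mulr_natl.
rewrite /indN.
case: asboolP => [_|not_inN].
  by rewrite subrr mulr0 subr0; apply: ler_sum => j _; exact: potential_traj_cons_le.
have [j0 descent] : exists j0, phi (j0 :: h) <= phi h - eps.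
  apply: contra_notP not_inN => no_descent; apply: inN_of_no_descent => j.
  by rewrite ltNge; apply/negP => hj; apply: no_descent; exists j.
rewrite subr0 mulr1 (bigD1 j0) //= [X in _ <= X - _](bigD1 j0) //=.
have : \sum_(j | j != j0) phi (j :: h) <= \sum_(j | j != j0) phi h.
  by apply: ler_sum => j _; exact: potential_traj_cons_le.
lra.
Qed.

Lemma sum1_tuple_ord k : \sum_(t : k.-tuple 'I_n.+1) (1 : R) = ((n.+1) ^ k)%:R.
Proof. by rewrite sumr_const card_tuple card_ord. Qed.

Definition expected_potential k : R :=
  (\sum_(t : k.-tuple 'I_n.+1) phi t) / ((n.+1) ^ k)%:R.

Lemma probNE eps k :
  probN p d rho al0 b0 selB selA eps k =
  (\sum_(t : k.-tuple 'I_n.+1) indN eps t) / ((n.+1) ^ k)%:R.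
Proof. by []. Qed.

Lemma probN_le1 eps k : probN p d rho al0 b0 selB selA eps k <= 1.
Proof.
rewrite probNE ler_pdivrMr ?ltr0n ?expn_gt0 // mul1r -sum1_tuple_ord.
by apply: ler_sum => t _; rewrite /indN; case: asboolP.
Qed.

Lemma expected_potential_ge k : potential_lb W Y rho <= expected_potential k.
Proof.
rewrite /expected_potential ler_pdivlMr ?ltr0n ?expn_gt0 //.
rewrite -sum1_tuple_ord mulr_sumr; apply: ler_sum => t _; rewrite mulr1.
have [hal hb] := traj_feasible t.
exact: potential_lb_le.
Qed.

Lemma expected_potential_descent eps k :
  expected_potential k.+1 + eps / (n.+1)%:R * (1 - probN p d rho al0 b0 selB selA eps k)
  <= expected_potential k.
Proof.
have hsum : \sum_(t : k.+1.-tuple 'I_n.+1) phi t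
    <= (n.+1)%:R * \sum_(t : k.-tuple 'I_n.+1) phi t
       - eps * (((n.+1) ^ k)%:R - \sum_(t : k.-tuple 'I_n.+1) indN eps t).
  rewrite (sum_tuple_cons k (fun s => phi s)) -sum1_tuple_ord -sumrB.
  rewrite !mulr_sumr -sumrB; apply: ler_sum => t _.
  exact: sum_potential_traj_cons_le.
set N : R := (n.+1)%:R in hsum *; set c : R := ((n.+1) ^ k)%:R in hsum *.
have N0 : 0 < N by rewrite ltr0n.
have c0 : 0 < c by rewrite ltr0n expn_gt0.
rewrite probNE /expected_potential -/c expnS natrM -/N -/c.
set S1 := \sum_(t : k.+1.-tuple _) _ in hsum *.
set S0 := \sum_(t : k.-tuple _) phi t in hsum *.
set G := \sum_(t : k.-tuple _) _ in hsum *.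
rewrite -subr_ge0.
have -> : S0 / c - (S1 / (N * c) + eps / N * (1 - G / c))
        = (N * S0 - eps * (c - G) - S1) / (N * c).
  by field; rewrite !gt_eqF.
by apply: divr_ge0; rewrite ?subr_ge0 // mulr_ge0 ?ltW.
Qed.

End Dynamics.

Theorem mainTheorem9 (R : realType) (n : nat) (X : finType) (W Y : 'I_n -> finType)
  (p : X -> Zs n X -> Ws W -> R) (d : X -> X -> R) (rho : R)
  (al0 : profile R X W Y) (b0 : rstrat R X Y)
  (selB : seq 'I_n.+1 -> profile R X W Y -> rstrat R X Y)
  (selA : forall j : 'I_n, seq 'I_n.+1 -> profile R X W Y -> rstrat R X Y -> strat R X W Y j) :
  (2 <= n)%N ->
  (0 < #|X|)%N -> (forall i, 0 < #|W i|)%N -> (forall i, 0 < #|Y i|)%N ->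
  is_pmf p ->
  (forall x xh, 0 <= d x xh) ->
  inAs al0 -> inB b0 ->
  (forall h al, inAs al ->
     inB (selB h al) /\
     forall b, inB b -> V p d al (selB h al) <= V p d al b) ->
  (forall (j : 'I_n) h al b, inAs al -> inB b ->
     inA (selA j h al b) /\
     forall a : strat R X W Y j, inA a ->
       U p d rho j (upd al (selA j h al b)) b <= U p d rho j (upd al a) b) ->
  forall eps : R, 0 < eps ->
    ((fun k => probN p d rho al0 b0 selB selA eps k) @ \oo --> (1 : R)).
Proof.
move=> _ _ _ _ p_pmf d_ge0 al0_feasible b0_feasible selB_best selA_best eps eps0.
set P := fun k => probN p d rho al0 b0 selB selA eps k.
have gap_cvg0 : (fun k => 1 - P k) @ \oo --> 0.
  apply: (descent_cvg0 (a := expected_potential p d rho al0 b0 selB selA)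
            (c := eps / (n.+1)%:R) (L := potential_lb W Y rho)).
  - by rewrite divr_gt0 ?ltr0n.
  - exact: expected_potential_ge.
  - by move=> k; rewrite subr_ge0; exact: probN_le1.
  - exact: expected_potential_descent.
apply/subr_cvg0.
have -> : (fun k => P k - 1) = - (fun k => 1 - P k).
  by apply: funext => k; rewrite /= opprB.
by rewrite -oppr0; exact: cvgN.
Qed.
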